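(* Let $k\ge4$ and $x\in(1/4,1/2)$. In the one-shot $k$-candidate positioning game with uniform voters on $[0,1]$, left–right tie-breaking, and each candidate's payoff equal to its probability of being the plurality winner, the mixed strategy in which each candidate independently chooses $x$ or $1-x$ with probability $1/2$ each is a symmetric mixed-strategy Nash equilibrium: if all other $k-1$ candidates use this strategy, no (possibly mixed) strategy of the remaining candidate yields a higher win probability.
   Context: Voters form a continuum uniformly distributed on $[0,1]$, each voting for the nearest occupied point. The vote share allocated to an occupied point is the measure of voters whose nearest occupied point it is; it splits into a left part (voters to its left) and a right part (voters to its right). Left–right tie-breaking: if several candidates occupy the same point, one of them chosen uniformly at random receives the entire left part of that point's vote share and a different one chosen uniformly at random receives the entire right part; the others receive nothing. (A single candidate at a point receives both parts.) The plurality winner is the candidate with the largest vote share, ties broken uniformly at random. Each of the $k$ candidates chooses a position in $[0,1]$ (possibly at random). *)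

From mathcomp Require Import all_boot all_order all_algebra.
From mathcomp Require Import all_classical all_reals all_analysis.
Set Implicit Arguments. Unset Strict Implicit. Unset Printing Implicit Defensive.
Import Order.TTheory GRing.Theory Num.Theory.
Local Open Scope ring_scope.

Section Game.
Variables (R : realType) (k : nat).

(* Left part of the vote share of the occupied point y (y in [0,1]):
   measure of voters in [0,y] whose nearest occupied point is y, i.e.
   min(y, (y - prev)/2) where prev ranges over occupied points left of y
   (= y if there is none). *)
Definition left_part (p : 'I_k -> R) (y : R) : R :=
  \big[Num.min/y]_(j | p j < y) ((y - p j) / 2).

(* Right part: measure of voters in [y,1] whose nearest occupied point is y. *)
Definition right_part (p : 'I_k -> R) (y : R) : R :=
  \big[Num.min/(1 - y)]_(j | y < p j) ((p j - y) / 2).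

(* A tie-breaking outcome: lr.1 i (resp. lr.2 i) is the candidate receiving the
   left (resp. right) part of the point p i.  Uniform choice among valid outcomes is
   exactly: independently for each point, a uniformly random ordered pair of
   distinct candidates there. *)
Definition valid_tb (p : 'I_k -> R)
    (lr : {ffun 'I_k -> 'I_k} * {ffun 'I_k -> 'I_k}) : bool :=
  [forall i : 'I_k,
     [&& p (lr.1 i) == p i, p (lr.2 i) == p i,
         (1 < #|[set j | p j == p i]|)%N ==> (lr.1 i != lr.2 i) &
         [forall j : 'I_k, (p j == p i) ==> ((lr.1 j == lr.1 i) && (lr.2 j == lr.2 i))]]].

Definition share (p : 'I_k -> R) (lr : {ffun 'I_k -> 'I_k} * {ffun 'I_k -> 'I_k})
    (j : 'I_k) : R :=
  (if lr.1 j == j then left_part p (p j) else 0) +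
  (if lr.2 j == j then right_part p (p j) else 0).

Definition is_top (p : 'I_k -> R) lr (j : 'I_k) : bool :=
  [forall l : 'I_k, share p lr l <= share p lr j].

Definition win_prob (p : 'I_k -> R) (i : 'I_k) : R :=
  (#|[set lr | valid_tb p lr]|%:R)^-1 *
  \sum_(lr | valid_tb p lr)
     (if is_top p lr i then (#|[set j | is_top p lr j]|%:R)^-1 else 0).

Definition profile (x : R) (i : 'I_k) (c : {ffun 'I_k -> bool}) (y : R) : 'I_k -> R :=
  fun j => if j == i then y else if c j then x else 1 - x.

Definition dev_payoff (x : R) (i : 'I_k) (y : R) : R :=
  ((2 ^ k.-1)%:R)^-1 * \sum_(c : {ffun 'I_k -> bool} | c i == false)
     win_prob (profile x i c y) i.

End Game.

From mathcomp Require Import all_boot all_order all_algebra.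
From mathcomp Require Import all_classical all_reals all_analysis.
From mathcomp Require Import perm ring lra zify.
Import Order.TTheory GRing.Theory Num.Theory HBNNSimple.
Set Implicit Arguments. Unset Strict Implicit. Unset Printing Implicit Defensive.
Local Open Scope ring_scope.

(* Reflecting [0, 1] shows that the deviator earns the same at x as at 1 - x.
   Summed over the k candidates, whose roles are symmetric, the win probabilities
   over all 2^k placements of the candidates on {x, 1 - x} add up to 2^k; half of
   that total comes from the deviator at x and half from it at 1 - x, so both
   payoffs equal 1/k.  At any other y in [0, 1] the deviator loses unless all
   others share one point: if y < x the candidate holding the right part at 1 - x
   gets x while the deviator gets at most (x + y)/2, and if y > x the candidate
   holding the left part at x gets x while the deviator gets at most
   max((1 - 2x)/2, (1 + x - y)/2), which is less than x because x > 1/4.  The two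
   exceptional placements have probability 2/2^(k-1) <= 1/k when k >= 4, so no
   strategy supported on [0, 1] beats 1/k. *)

Lemma card_set_inj (T : finType) (f : T -> T) (A B : pred T) :
  injective f -> (forall t, B (f t) = A t) -> #|[set t | B t]| = #|[set t | A t]|.
Proof.
move=> f_inj BfA; rewrite -(card_preimset _ f_inj).
by apply: eq_card => t; rewrite !inE BfA.
Qed.

Lemma forallb_inj (T : finType) (f : T -> T) (P : pred T) :
  injective f -> [forall t, P t] = [forall t, P (f t)].
Proof.
move=> /injF_bij [g fK gK]; apply/forallP/forallP => H t; first exact: H.
by rewrite -(gK t); exact: H.
Qed.

Local Notation tb_outcome k := ({ffun 'I_k -> 'I_k} * {ffun 'I_k -> 'I_k})%type.

Section WinProb.
Variables (R : realType) (k : nat).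
Implicit Types (p q : 'I_k -> R) (i j : 'I_k).

Lemma is_top_exists p (lr : tb_outcome k) (k0 : 'I_k) : exists j, is_top p lr j.
Proof.
case: (@arg_maxP _ _ _ k0 predT (share p lr)) => // j _ Hj.
by exists j; apply/forallP => l; apply: Hj.
Qed.

Lemma card_is_top_gt0 p (lr : tb_outcome k) i : is_top p lr i ->
  (0 < #|[set j | is_top p lr j]|)%N.
Proof. by move=> Hi; apply/card_gt0P; exists i; rewrite inE. Qed.

Lemma valid_tb_exists p : exists lr : tb_outcome k, valid_tb p lr.
Proof.
pose at_min i := [arg min_(m < i | p m == p i) val m].
pose at_max i := [arg max_(m > i | p m == p i) val m].
have at_minP i : p (at_min i) = p i /\ forall m, p m = p i -> (at_min i <= m)%N.
  rewrite /at_min; case: arg_minnP => // a /eqP pa Ha.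
  by split=> // m /eqP; exact: Ha.
have at_maxP i : p (at_max i) = p i /\ forall m, p m = p i -> (m <= at_max i)%N.
  rewrite /at_max; case: arg_maxnP => // a /eqP pa Ha.
  by split=> // m /eqP; exact: Ha.
have at_min_eq i j : p j = p i -> at_min j = at_min i.
  move=> pji; have [pi Hi] := at_minP i; have [pj Hj] := at_minP j.
  by apply/val_inj/eqP; rewrite eqn_leq Hj ?Hi ?pj ?pi.
have at_max_eq i j : p j = p i -> at_max j = at_max i.
  move=> pji; have [pi Hi] := at_maxP i; have [pj Hj] := at_maxP j.
  by apply/val_inj/eqP; rewrite eqn_leq Hj ?Hi ?pj ?pi.
exists ([ffun i => at_min i], [ffun i => at_max i]).
apply/forallP => i; rewrite /= !ffunE.
have [pa Ha] := at_minP i; have [pb Hb] := at_maxP i.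
apply/and4P; split; rewrite ?pa ?pb //.
  apply/implyP => /card_gt1P [a [b [+ + ab]]]; rewrite !inE => /eqP pai /eqP pbi.
  apply: contra_neq ab => /(congr1 (@nat_of_ord k)) Eab; apply/ord_inj.
  by have := Ha a pai; have := Ha b pbi; have := Hb a pai; have := Hb b pbi; lia.
apply/forallP => j; apply/implyP => /eqP pji.
by rewrite !ffunE (at_min_eq i j) ?(at_max_eq i j) ?eqxx.
Qed.

Lemma win_prob_ge0 p i : 0 <= win_prob p i.
Proof.
rewrite /win_prob mulr_ge0 // ?invr_ge0 // sumr_ge0 // => lr _.
by case: ifP => // _; rewrite invr_ge0.
Qed.

Lemma win_prob_le1 p i : win_prob p i <= 1.
Proof.
rewrite /win_prob.
have -> : #|[set lr | valid_tb p lr]| = #|[pred lr : tb_outcome k | valid_tb p lr]|.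
  by apply: eq_card => lr; rewrite inE.
have [n0|n_gt0] := posnP #|[pred lr : tb_outcome k | valid_tb p lr]|.
  by rewrite n0 invr0 mul0r.
rewrite ler_pdivrMl ?ltr0n // mulr1 -sum1_card natr_sum ler_sum // => lr _.
case: ifP => // /card_is_top_gt0 top_gt0.
by rewrite invf_le1 ?ler1n ?ltr0n.
Qed.

Lemma win_prob_eq0 p i :
  (forall lr, valid_tb p lr -> ~~ is_top p lr i) -> win_prob p i = 0.
Proof.
by move=> H; rewrite /win_prob big1 ?mulr0 // => lr /H /negbTE ->.
Qed.

Lemma sum_win_prob p (k0 : 'I_k) : \sum_i win_prob p i = 1.
Proof.
rewrite /win_prob -mulr_sumr exchange_big /=.
have -> : #|[set lr | valid_tb p lr]| = #|[pred lr : tb_outcome k | valid_tb p lr]|.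
  by apply: eq_card => lr; rewrite inE.
rewrite (eq_bigr (fun=> 1)) => [|lr _]; last first.
  rewrite -big_mkcond /= sumr_const.
  have [j /card_is_top_gt0] := is_top_exists p lr k0.
  rewrite (eq_card (B := [pred j | is_top p lr j])) => [top_gt0|m]; last by rewrite inE.
  by rewrite -(mulr_natl (_^-1)) mulfV // pnatr_eq0 -lt0n.
rewrite sumr_const -mulr_natr mul1r mulVf // pnatr_eq0 -lt0n.
by have [lr V] := valid_tb_exists p; apply/card_gt0P; exists lr.
Qed.

Lemma win_prob_relabel p q (s : 'I_k -> 'I_k) (F : tb_outcome k -> tb_outcome k) :
  injective s -> injective F ->
  (forall lr, valid_tb q (F lr) = valid_tb p lr) ->
  (forall lr j, valid_tb p lr -> share q (F lr) (s j) = share p lr j) ->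
  forall i, win_prob q (s i) = win_prob p i.
Proof.
move=> s_inj F_inj validF shareF i.
have topF lr j : valid_tb p lr -> is_top q (F lr) (s j) = is_top p lr j.
  move=> V; rewrite /is_top (forallb_inj _ s_inj).
  by apply: eq_forallb => l; rewrite !shareF.
have card_topF lr : valid_tb p lr ->
    #|[set j | is_top q (F lr) j]| = #|[set j | is_top p lr j]|.
  by move=> V; apply: card_set_inj s_inj _ => j; rewrite topF.
rewrite /win_prob (card_set_inj (A := valid_tb p) F_inj) //.
rewrite (reindex_inj F_inj) /=; under eq_bigl do rewrite validF.
by congr (_ * _); apply: eq_bigr => lr V; rewrite topF // card_topF.
Qed.

Lemma valid_tb_swap p (lr : tb_outcome k) : valid_tb p (lr.2, lr.1) = valid_tb p lr.
Proof.
apply: eq_forallb => i /=; rewrite andbCA [lr.2 i == _]eq_sym.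
congr [&& _, _, _ & _].
by apply: eq_forallb => j; rewrite andbC.
Qed.

Lemma valid_tb_eq_rel p q : (forall a b, (q a == q b) = (p a == p b)) ->
  valid_tb q =1 valid_tb p.
Proof.
move=> E lr; apply: eq_forallb => i; rewrite !E.
congr [&& _, _, (1 < _)%N ==> _ & _].
  by apply: eq_card => j; rewrite !inE E.
by apply: eq_forallb => j; rewrite E.
Qed.

Lemma win_prob_reflect p i : win_prob (fun j => 1 - p j) i = win_prob p i.
Proof.
have leftE y : left_part (fun j => 1 - p j) (1 - y) = right_part p y.
  apply: eq_big => [l|l _]; first by rewrite ltrD2l ltrN2.
  by congr (_ / _); ring.
have rightE y : right_part (fun j => 1 - p j) (1 - y) = left_part p y.
  rewrite /right_part opprB addrC subrK.
  apply: eq_big => [l|l _]; first by rewrite ltrD2l ltrN2.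
  by congr (_ / _); ring.
pose swap (lr : tb_outcome k) : tb_outcome k := (lr.2, lr.1).
have swapK : involutive swap by case.
apply: (@win_prob_relabel p _ id swap) => // [|lr|lr j _]; first exact: inv_inj.
  rewrite valid_tb_swap; apply: valid_tb_eq_rel => a b.
  by rewrite (inj_eq (addrI 1)) (inj_eq oppr_inj).
by rewrite /share /= leftE rightE addrC.
Qed.

Lemma win_prob_perm p (s s' : 'I_k -> 'I_k) i :
  cancel s s' -> cancel s' s -> win_prob (fun j => p (s' j)) (s i) = win_prob p i.
Proof.
move=> sK s'K; have s_inj := can_inj sK.
have leftE y : left_part (fun j => p (s' j)) y = left_part p y.
  by rewrite /left_part (reindex_inj s_inj); apply: eq_big => [l|l _]; rewrite /= sK.
have rightE y : right_part (fun j => p (s' j)) y = right_part p y.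
  by rewrite /right_part (reindex_inj s_inj); apply: eq_big => [l|l _]; rewrite /= sK.
pose act (f : 'I_k -> 'I_k) (g : 'I_k -> 'I_k) (lr : tb_outcome k) : tb_outcome k :=
  ([ffun j => f (lr.1 (g j))], [ffun j => f (lr.2 (g j))]).
have actK f g : cancel f g -> cancel g f -> cancel (act f g) (act g f).
  by move=> fK gK [l r]; congr pair; apply/ffunP => j; rewrite !ffunE !fK.
apply: (@win_prob_relabel p _ s (act s s')) => //.
- exact: can_inj (actK _ _ sK s'K).
- move=> lr; rewrite /valid_tb (forallb_inj _ s_inj); apply: eq_forallb => j.
  rewrite /act /= !ffunE !sK (inj_eq s_inj).
  rewrite (card_set_inj (A := fun l => p l == p j) s_inj) => [|l]; last by rewrite sK.
  congr [&& _, _, _ & _]; rewrite (forallb_inj _ s_inj); apply: eq_forallb => l.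
  by rewrite !ffunE !sK !(inj_eq s_inj).
- by move=> lr j _; rewrite /share /act /= !ffunE !sK !(inj_eq s_inj) leftE rightE.
Qed.

End WinProb.

Section Shares.
Variables (R : realType) (k : nat).
Implicit Types (p : 'I_k -> R) (i j : 'I_k) (y : R).

Lemma left_part_ge0 p y : 0 <= y -> 0 <= left_part p y.
Proof. by move=> y0; apply: le_bigmin => // j lt_j; rewrite divr_ge0 // subr_ge0 ltW. Qed.

Lemma right_part_ge0 p y : y <= 1 -> 0 <= right_part p y.
Proof.
move=> y1; apply: le_bigmin => [|j lt_j]; first by rewrite subr_ge0.
by rewrite divr_ge0 // subr_ge0 ltW.
Qed.

Lemma left_part_le_self p y : left_part p y <= y.
Proof. exact: bigmin_le_id. Qed.

Lemma right_part_le_compl p y : right_part p y <= 1 - y.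
Proof. exact: bigmin_le_id. Qed.

Lemma left_part_le p y j : p j < y -> left_part p y <= (y - p j) / 2.
Proof. exact: (bigmin_le_cond _ (fun j => (y - p j) / 2)). Qed.

Lemma right_part_le p y j : y < p j -> right_part p y <= (p j - y) / 2.
Proof. exact: (bigmin_le_cond _ (fun j => (p j - y) / 2)). Qed.

Lemma left_part_leftmost p y : (forall j, y <= p j) -> left_part p y = y.
Proof. by move=> ge_y; rewrite /left_part big_pred0 // => j; rewrite ltNge ge_y. Qed.

Lemma right_part_rightmost p y : (forall j, p j <= y) -> right_part p y = 1 - y.
Proof. by move=> le_y; rewrite /right_part big_pred0 // => j; rewrite ltNge le_y. Qed.

Lemma share_le_parts p (lr : tb_outcome k) j : 0 <= p j <= 1 ->
  share p lr j <= left_part p (p j) + right_part p (p j).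
Proof.
case/andP=> /(left_part_ge0 p) L0 /(right_part_ge0 p) R0.
by rewrite /share; case: ifP; case: ifP => _ _; lra.
Qed.

Lemma left_holder_share_ge p (lr : tb_outcome k) j : valid_tb p lr -> p j <= 1 ->
  left_part p (p j) <= share p lr (lr.1 j).
Proof.
move=> /forallP /(_ j) /and4P [/eqP pl _ _ /forallP /(_ (lr.1 j))].
rewrite pl eqxx => /andP [/eqP ll _] /(right_part_ge0 p) R0.
by rewrite /share ll pl eqxx; case: ifP => _; lra.
Qed.

Lemma right_holder_share_ge p (lr : tb_outcome k) j : valid_tb p lr -> 0 <= p j ->
  right_part p (p j) <= share p lr (lr.2 j).
Proof.
move=> /forallP /(_ j) /and4P [_ /eqP pr _ /forallP /(_ (lr.2 j))].
rewrite pr eqxx => /andP [_ /eqP rr] /(left_part_ge0 p) L0.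
by rewrite /share rr pr eqxx; case: ifP => _; lra.
Qed.

Lemma deviator_not_top p (x y : R) i j1 j2 (lr : tb_outcome k) :
  1/4 < x -> x < 1/2 -> 0 <= y <= 1 -> y != x -> y != 1 - x ->
  p i = y -> p j1 = x -> p j2 = 1 - x ->
  (forall j, j != i -> p j = x \/ p j = 1 - x) ->
  valid_tb p lr -> ~~ is_top p lr i.
Proof.
move=> x_gt x_lt y01 yx yx' pi pj1 pj2 others V; apply/negP => /forallP top_i.
have pos j : [\/ p j = x, p j = 1 - x | p j = y].
  by case: (eqVneq j i) => [->|/others []]; [constructor 3 | constructor 1 | constructor 2].
have := @share_le_parts p lr i; rewrite pi => /(_ y01) share_i.
case: (ltrgtP y x) => [ylx|xly|yex]; last by rewrite yex eqxx in yx.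
- have := top_i (lr.2 j2).
  have : right_part p (p j2) <= share p lr (lr.2 j2).
    by apply: right_holder_share_ge; rewrite // pj2; lra.
  rewrite pj2 right_part_rightmost => [|j]; last by case: (pos j) => ->; lra.
  have := left_part_le_self p y; have := @right_part_le p y j1; rewrite pj1.
  by move=> /(_ ylx); lra.
- have := top_i (lr.1 j1).
  have : left_part p (p j1) <= share p lr (lr.1 j1).
    by apply: left_holder_share_ge; rewrite // pj1; lra.
  rewrite pj1 left_part_leftmost => [|j]; last by case: (pos j) => ->; lra.
  have := @left_part_le p y j1; rewrite pj1 => /(_ xly).
  case: (ltrgtP y (1 - x)) => [yl|yg|yeq]; last by rewrite yeq eqxx in yx'.
  + by have := @right_part_le p y j2; rewrite pj2 => /(_ yl); lra.
  + have := @left_part_le p y j2; rewrite pj2 => /(_ yg).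
    by have := right_part_le_compl p y; lra.
Qed.

End Shares.

Section SymmetricMix.
Variables (R : realType) (k : nat) (x : R) (i : 'I_k).
Implicit Types (c s : {ffun 'I_k -> bool}) (y : R).

Definition mixed_profile s : 'I_k -> R := fun j => if s j then x else 1 - x.

Lemma sum_win_prob_mixed_indep (l : 'I_k) :
  \sum_s win_prob (mixed_profile s) i = \sum_s win_prob (mixed_profile s) l.
Proof.
pose t := tperm i l.
pose relabel s : {ffun 'I_k -> bool} := [ffun j => s (t j)].
have relabelK : involutive relabel by move=> s; apply/ffunP => j; rewrite !ffunE tpermK.
rewrite (reindex_inj (inv_inj relabelK)) /=; apply: eq_bigr => s _.
have -> : mixed_profile (relabel s) = fun j => mixed_profile s (t j).
  by apply: funext => j; rewrite /mixed_profile ffunE.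
by rewrite -{1}(tpermR i l) win_prob_perm // => j; rewrite tpermK.
Qed.

Lemma sum_win_prob_mixed : k%:R * \sum_s win_prob (mixed_profile s) i = (2 ^ k)%:R.
Proof.
have <- : \sum_(l < k) \sum_s win_prob (mixed_profile s) l =
           k%:R * \sum_s win_prob (mixed_profile s) i.
  rewrite (eq_bigr _ (fun l _ => esym (sum_win_prob_mixed_indep l))).
  by rewrite sumr_const card_ord mulr_natl.
rewrite exchange_big /= (eq_bigr (fun=> 1)) => [|s _]; last exact: sum_win_prob.
by rewrite sumr_const card_ffun card_bool card_ord.
Qed.

Lemma sum_win_prob_mixed_split :
  \sum_s win_prob (mixed_profile s) i =
  \sum_(c : {ffun 'I_k -> bool} | c i == false)
     (win_prob (profile x i c x) i + win_prob (profile x i c (1 - x)) i).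
Proof.
pose flip c : {ffun 'I_k -> bool} := [ffun j => if j == i then ~~ c j else c j].
have flipK : involutive flip.
  by move=> c; apply/ffunP => j; rewrite !ffunE; case: eqP; rewrite ?negbK.
rewrite big_split /= (bigID (fun s => s i)) /=; congr (_ + _).
  rewrite (reindex_inj (inv_inj flipK)) /=.
  apply: eq_big => [c|c]; first by rewrite ffunE eqxx; case: (c i).
  rewrite ffunE eqxx => ci; congr win_prob; apply: funext => j.
  by rewrite /profile /mixed_profile ffunE; case: eqP => [->|]; rewrite ?ci.
apply: eq_big => [c|c ci]; first by case: (c i).
congr win_prob; apply: funext => j.
by rewrite /profile /mixed_profile; case: eqP => [->|]; rewrite ?(negbTE ci).
Qed.

Lemma dev_payoff_reflect : dev_payoff x i (1 - x) = dev_payoff x i x.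
Proof.
rewrite /dev_payoff; congr (_ * _).
pose negate c : {ffun 'I_k -> bool} := [ffun j => if j == i then c j else ~~ c j].
have negateK : involutive negate.
  by move=> c; apply/ffunP => j; rewrite !ffunE; case: eqP; rewrite ?negbK.
rewrite (reindex_inj (inv_inj negateK)) /=.
apply: eq_big => [c|c _]; first by rewrite ffunE eqxx.
rewrite -win_prob_reflect; congr win_prob; apply: funext => j.
rewrite /profile ffunE; case: eqP => _; first ring.
by case: (c j) => /=; ring.
Qed.

Lemma dev_payoff_on_support : (0 < k)%N -> dev_payoff x i x = k%:R^-1.
Proof.
move=> k_gt0.
have k_neq0 : k%:R != 0 :> R by rewrite pnatr_eq0 -lt0n.
have e_neq0 : (2 ^ k.-1)%:R != 0 :> R by rewrite pnatr_eq0 expn_eq0.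
have both : dev_payoff x i x + dev_payoff x i (1 - x) =
            ((2 ^ k.-1)%:R)^-1 * \sum_s win_prob (mixed_profile s) i.
  by rewrite /dev_payoff -mulrDr -big_split sum_win_prob_mixed_split.
have total := sum_win_prob_mixed.
rewrite -[in (2 ^ k)%N](prednK k_gt0) expnS natrM in total.
rewrite dev_payoff_reflect -(mulKf k_neq0 (\sum_s _)) total in both.
have -> : dev_payoff x i x = (dev_payoff x i x + dev_payoff x i x) / 2 by field.
by rewrite both; field; rewrite k_neq0 e_neq0.
Qed.

Lemma dev_payoff_ge0 y : 0 <= dev_payoff x i y.
Proof.
rewrite /dev_payoff mulr_ge0 ?invr_ge0 // sumr_ge0 // => c _.
exact: win_prob_ge0.
Qed.

Lemma dev_payoff_bounded : exists M, forall y, dev_payoff x i y <= M.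
Proof.
exists (((2 ^ k.-1)%:R)^-1 * \sum_(c : {ffun 'I_k -> bool} | c i == false) 1) => y.
by rewrite /dev_payoff ler_wpM2l ?invr_ge0 // ler_sum // => c _; exact: win_prob_le1.
Qed.

Hypotheses (x_gt : 1 / 4 < x) (x_lt : x < 1 / 2).

Lemma win_prob_deviator_eq0 c y : 0 <= y <= 1 -> y != x -> y != 1 - x ->
  c i = false -> (exists j1, c j1) -> (exists2 j2, j2 != i & ~~ c j2) ->
  win_prob (profile x i c y) i = 0.
Proof.
move=> y01 yx yx' ci [j1 cj1] [j2 j2i cj2].
have j1i : j1 != i by apply: contraTneq cj1 => ->; rewrite ci.
apply: win_prob_eq0 => lr V.
apply: (deviator_not_top (j1 := j1) (j2 := j2) x_gt x_lt y01 yx yx') => //.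
- by rewrite /profile eqxx.
- by rewrite /profile (negbTE j1i) cj1.
- by rewrite /profile (negbTE j2i) (negbTE cj2).
- by move=> j ji; rewrite /profile (negbTE ji); case: (c j); [left | right].
Qed.

Lemma dev_payoff_off_support y : 0 <= y <= 1 -> y != x -> y != 1 - x ->
  dev_payoff x i y <= 2 / (2 ^ k.-1)%:R.
Proof.
move=> y01 yx yx'.
pose all_x : {ffun 'I_k -> bool} := [ffun j => j != i].
pose all_1x : {ffun 'I_k -> bool} := [ffun => false].
pose ind c c0 : R := (c == c0)%:R.
have sum_ind c0 : c0 i == false ->
    \sum_(c : {ffun 'I_k -> bool} | c i == false) ind c c0 = 1.
  move=> c0i; rewrite (bigD1 c0) //= /ind eqxx big1 ?addr0 // => c /andP [_].
  by move/negbTE ->.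
rewrite /dev_payoff mulrC ler_wpM2r ?invr_ge0 //.
apply: (@le_trans _ _ (\sum_(c : {ffun 'I_k -> bool} | c i == false)
                         (ind c all_x + ind c all_1x))); last first.
  by rewrite big_split /= !sum_ind ?ffunE ?eqxx.
apply: ler_sum => c /eqP ci; rewrite /ind.
have [->|c_x] := eqVneq c all_x.
  by rewrite (le_trans (win_prob_le1 _ _)) // lerDl.
have [->|c_1x] := eqVneq c all_1x.
  by rewrite add0r win_prob_le1.
rewrite /= add0r le_eqVlt win_prob_deviator_eq0 ?eqxx //.
  apply/existsP; apply: contraR c_1x => /existsPn c_false.
  by apply/eqP/ffunP => j; rewrite ffunE; exact/negbTE/c_false.
apply/exists_inP; apply: contraR c_x => /exists_inPn c_true.
apply/eqP/ffunP => j; rewrite ffunE.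
by have [->|ji] := eqVneq j i; [rewrite ci | exact/negPn/c_true].
Qed.

End SymmetricMix.

Lemma double_leq_exp2_pred n : (4 <= n)%N -> (n.*2 <= 2 ^ n.-1)%N.
Proof.
elim: n => // n IH; rewrite leq_eqVlt => /orP [/eqP <- // | n4].
have := IH n4; rewrite /= -[in (2 ^ n)%N](prednK (_ : 0 < n)%N) ?expnS; lia.
Qed.

Lemma two_div_exp2_pred_le (R : realType) n : (4 <= n)%N ->
  2 / (2 ^ n.-1)%:R <= n%:R^-1 :> R.
Proof.
move=> n4; rewrite ler_pdivrMr ?ltr0n ?expn_gt0 // mulrC ler_pdivlMr ?ltr0n; last lia.
by rewrite -natrM ler_nat mulnC muln2 double_leq_exp2_pred.
Qed.

(* No measurability of f is needed: the integral of a nonnegative function is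
   the supremum of the integrals of the simple functions below it. *)
Lemma integral_le_cst_on_full d (T : measurableType d) (R : realType)
    (mu : probability T R) (A : set T) (f : T -> R) (C : R) :
  measurable A -> mu A = 1%E -> (forall t, 0 <= f t) ->
  (exists M, forall t, f t <= M) -> (forall t, A t -> f t <= C) ->
  (\int[mu]_t (f t)%:E <= C%:E)%E.
Proof.
move=> mA muA f0 [M fM] fC.
rewrite ge0_integralTE => [|t]; last by rewrite lee_fin.
apply: ge_ereal_sup => _ [h hf <-] /=.
rewrite -integralT_nnsfun.
have mh := proj2 (measurable_realfun.measurable_EFinP setT h) (measurable_funPT h).
have h_le_f t : h t <= f t by have := hf t; rewrite lee_fin.
rewrite -(setUv A) integral_setU //; last 3 first.
- exact: measurableC.
- by rewrite setUv.
- exact/disj_setPCl.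
have on_A : (\int[mu]_(t in A) (h t)%:E <= C%:E)%E.
  rewrite -[leRHS]mule1 -muA -integral_cst //.
  apply: ge0_le_integral => //.
  - by move=> t _; rewrite lee_fin.
  - exact: measurable_funS mh.
  - by move=> t At; rewrite lee_fin (le_trans (h_le_f t)) ?fC.
have off_A : (\int[mu]_(t in (~` A)%classic) (h t)%:E <= 0)%E.
  have -> : 0%E = (M%:E * mu (~` A)%classic)%E.
    by rewrite probability_setC // muA subee ?mule0.
  rewrite -integral_cst; last exact: measurableC.
  apply: ge0_le_integral => //.
  - exact: measurableC.
  - by move=> t _; rewrite lee_fin.
  - exact: measurable_funS mh.
  - by move=> t _; rewrite lee_fin (le_trans (h_le_f t)).
by rewrite -[C%:E]adde0 leeD.
Qed.

Theorem mainTheorem19 (R : realType) (k : nat) (x : R) (i : 'I_k)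
    (hk : (4 <= k)%N) (hx1 : 1 / 4 < x) (hx2 : x < 1 / 2)
    (mu : probability R R) (hmu : mu `[0, 1]%classic = 1%E) :
  (\int[mu]_y (dev_payoff x i y)%:E <=
     ((dev_payoff x i x + dev_payoff x i (1 - x)) / 2)%:E)%E.
Proof.
have on_x : dev_payoff x i x = k%:R^-1 by rewrite dev_payoff_on_support // (leq_trans _ hk).
have -> : (dev_payoff x i x + dev_payoff x i (1 - x)) / 2 = k%:R^-1.
  by rewrite dev_payoff_reflect on_x; lra.
apply: integral_le_cst_on_full hmu _ _ _ => //.
- exact: dev_payoff_ge0.
- exact: dev_payoff_bounded.
move=> y /=; rewrite in_itv /= => y01.
have [->|yx] := eqVneq y x; first by rewrite on_x.
have [->|yx'] := eqVneq y (1 - x); first by rewrite dev_payoff_reflect on_x.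
exact: le_trans (dev_payoff_off_support i hx1 hx2 y01 yx yx') (two_div_exp2_pred_le R hk).
Qed.
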